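(* Let $F_1=1+5x-8x^2+x^3$, $G_0=1-x+x^2$, $G_1=1-235x+1430x^2-1695x^3+270x^4+229x^5+x^6$, and $\Phi_3(x)=\dfrac{1728\,x(x-1)F_1^7}{G_0^3G_1^3}$. Then in a neighborhood of $x=0$ (with all radical factors taking the value $1$ at $x=0$): $${}_3F_2\!\left(-\tfrac1{42},\tfrac{13}{42},\tfrac{9}{14};\tfrac47,\tfrac67;\Phi_3\right)=(1-x)^{1/7}G_0^{-1/14}G_1^{-1/14},$$ $${}_3F_2\!\left(\tfrac5{42},\tfrac{19}{42},\tfrac{11}{14};\tfrac57,\tfrac87;\Phi_3\right)=(1-x)^{2/7}F_1^{-1}G_0^{5/14}G_1^{5/14},$$ $${}_3F_2\!\left(\tfrac{17}{42},\tfrac{31}{42},\tfrac{15}{14};\tfrac97,\tfrac{10}7;\Phi_3\right)=(1-x)^{-3/7}F_1^{-3}G_0^{17/14}G_1^{17/14}.$$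
   Context: ${}_3F_2(\alpha_1,\alpha_2,\alpha_3;\beta_1,\beta_2;z)=\sum_{n\ge0}\frac{(\alpha_1)_n(\alpha_2)_n(\alpha_3)_n}{(\beta_1)_n(\beta_2)_n n!}z^n$. Note $\Phi_3(0)=0$. *)

From Stdlib Require Import Reals Factorial.
Open Scope R_scope.

Fixpoint poch (a : R) (n : nat) : R :=
  match n with
  | O => 1
  | S m => poch a m * (a + INR m)
  end.

Definition hyp32_coef (a1 a2 a3 b1 b2 : R) (n : nat) : R :=
  poch a1 n * poch a2 n * poch a3 n / (poch b1 n * poch b2 n * INR (fact n)).

Definition hyp32_sum (a1 a2 a3 b1 b2 z l : R) : Prop :=
  infinite_sum (fun n => hyp32_coef a1 a2 a3 b1 b2 n * z ^ n) l.

Definition F1 (x : R) : R := 1 + 5*x - 8*x^2 + x^3.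
Definition G0 (x : R) : R := 1 - x + x^2.
Definition G1 (x : R) : R :=
  1 - 235*x + 1430*x^2 - 1695*x^3 + 270*x^4 + 229*x^5 + x^6.
Definition Phi3 (x : R) : R :=
  1728 * x * (x - 1) * F1 x ^ 7 / (G0 x ^ 3 * G1 x ^ 3).

From Stdlib Require Import Reals Lra Lia ZArith List.
From Coquelicot Require Import Coquelicot.
Import ListNotations.
Open Scope R_scope.

(* Write e1 = 1 - b1, e2 = 1 - b2 and theta = z d/dz.  The 3F2 equation
   theta (theta - e1) (theta - e2) F = z (theta + a1) (theta + a2) (theta + a3) F turns the
   Frobenius components of F at z = 0 (local exponents e_0 = 0, e_1, e_2) into a first-order
   system  theta F_k = e_k F_k + z / (1 - z) sum_j mu_j F_j,  of which F is a fixed linear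
   combination.  For each identity, explicit algebraic functions H_k = b_k / (49 Np^3) * h, with h
   the claimed right-hand side and b_k integer polynomials, satisfy the same system pulled back
   along z = Phi3(x) and take the right values at x = 0; the polynomial identities behind this are
   checked by computation.  The differences F_k(Phi3 x) - H_k(x) solve a linear system with a
   regular singular point at x = 0 and vanish there; as every e_k <= 3/7 < 1, the energy
   E = sum_k ((F_k o Phi3 - H_k) / Phi3)^2 is bounded and satisfies x E' <= - E, hence E = 0. *)

(** * Integer polynomials *)

Definition zpoly := list Z.

Fixpoint zeval (p : zpoly) (x : R) : R :=
  match p with [] => 0 | a :: p' => IZR a + x * zeval p' x end.

Fixpoint zadd (p q : zpoly) : zpoly :=
  match p, q with
  | [], _ => q
  | _, [] => p
  | a :: p', b :: q' => (a + b)%Z :: zadd p' q'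
  end.

Definition zscale (c : Z) (p : zpoly) : zpoly := map (Z.mul c) p.

Definition zsub (p q : zpoly) : zpoly := zadd p (zscale (-1) q).

Fixpoint zmul (p q : zpoly) : zpoly :=
  match p with [] => [] | a :: p' => zadd (zscale a q) (0%Z :: zmul p' q) end.

Fixpoint zpow (p : zpoly) (n : nat) : zpoly :=
  match n with O => [1%Z] | S n' => zmul p (zpow p n') end.

Fixpoint zderiv (p : zpoly) : zpoly :=
  match p with [] => [] | _ :: p' => zadd p' (0%Z :: zderiv p') end.

Definition zeqb (p q : zpoly) : bool := forallb (Z.eqb 0) (zsub p q).

Lemma zeval_add p q x : zeval (zadd p q) x = zeval p x + zeval q x.
Proof.
  revert q; induction p as [|a p IH]; intros [|b q]; simpl; try ring.
  rewrite IH, plus_IZR; ring.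
Qed.

Lemma zeval_scale c p x : zeval (zscale c p) x = IZR c * zeval p x.
Proof. induction p as [|a p IH]; simpl; [ring|]. rewrite IH, mult_IZR; ring. Qed.

Lemma zeval_sub p q x : zeval (zsub p q) x = zeval p x - zeval q x.
Proof. unfold zsub. rewrite zeval_add, zeval_scale. ring. Qed.

Lemma zeval_mul p q x : zeval (zmul p q) x = zeval p x * zeval q x.
Proof.
  induction p as [|a p IH]; simpl; [ring|].
  rewrite zeval_add, zeval_scale; simpl. rewrite IH. ring.
Qed.

Lemma zeval_pow p n x : zeval (zpow p n) x = zeval p x ^ n.
Proof. induction n as [|n IH]; simpl; [ring|]. rewrite zeval_mul, IH; ring. Qed.

Lemma zeval_cons0 a p : zeval (a :: p) 0 = IZR a.
Proof. simpl; ring. Qed.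

Lemma zeqb_zeval p q x : zeqb p q = true -> zeval p x = zeval q x.
Proof.
  unfold zeqb; intros Hpq; apply Rminus_diag_uniq; rewrite <- zeval_sub.
  induction (zsub p q) as [|a r IH]; [reflexivity|].
  cbn [forallb] in Hpq; apply andb_prop in Hpq as [Ha Hr]; apply Z.eqb_eq in Ha; subst a.
  cbn [zeval]; rewrite IH by exact Hr; ring.
Qed.

Lemma is_derive_zeval p x : is_derive (zeval p) x (zeval (zderiv p) x).
Proof.
  induction p as [|a p IH]; simpl.
  - apply is_derive_Reals, derivable_pt_lim_const.
  - rewrite zeval_add; simpl.
    replace (zeval p x + (0 + x * zeval (zderiv p) x))
      with (0 + (1 * zeval p x + x * zeval (zderiv p) x)) by ring.
    apply (is_derive_plus (fun _ => IZR a) (fun y => y * zeval p y));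
      [apply is_derive_Reals, derivable_pt_lim_const|].
    apply (is_derive_mult (fun y => y) (zeval p)); [auto_derive; auto | exact IH | exact Rmult_comm].
Qed.

Lemma continuity_pt_zeval p x : continuity_pt (zeval p) x.
Proof.
  apply continuity_pt_filterlim, (ex_derive_continuous (zeval p)).
  eexists; apply is_derive_zeval.
Qed.

(** * Properties near 0 *)

Definition near0 (P : R -> Prop) : Prop := exists d, 0 < d /\ forall x, Rabs x < d -> P x.

Lemma near0_and (P Q : R -> Prop) : near0 P -> near0 Q -> near0 (fun x => P x /\ Q x).
Proof.
  intros [d1 [Hd1 HP]] [d2 [Hd2 HQ]].
  exists (Rmin d1 d2); split; [now apply Rmin_glb_lt|].
  intros x Hx; split; [apply HP | apply HQ];
    eapply Rlt_le_trans; eauto using Rmin_l, Rmin_r.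
Qed.

Lemma near0_impl (P Q : R -> Prop) : near0 P -> (forall x, P x -> Q x) -> near0 Q.
Proof. intros [d [Hd HP]] HPQ; exists d; auto. Qed.

Lemma near0_ball d : 0 < d -> near0 (fun x => Rabs x < d).
Proof. intros Hd; exists d; auto. Qed.

Lemma near0_forall3 (P : nat -> R -> Prop) :
  (forall k, (k <= 2)%nat -> near0 (P k)) -> near0 (fun x => forall k, (k <= 2)%nat -> P k x).
Proof.
  intros HP.
  assert (H012 := near0_and _ _ (HP 0%nat ltac:(lia))
                    (near0_and _ _ (HP 1%nat ltac:(lia)) (HP 2%nat ltac:(lia)))).
  apply (near0_impl _ _ H012); intros x [H0 [H1 H2]] [|[|[|k]]] Hk; auto; lia.
Qed.

Lemma near0_lt_of_continuity (f : R -> R) (v : R) :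
  continuity_pt f 0 -> f 0 < v -> near0 (fun x => f x < v).
Proof.
  intros Hc Hv. destruct (Hc (v - f 0) ltac:(lra)) as [d [Hd Hf]].
  exists d; split; [exact Hd|]. intros x Hx.
  destruct (Req_dec x 0) as [->|Hx0]; [exact Hv|].
  assert (Hdist : R_dist (f x) (f 0) < v - f 0).
  { apply Hf; split; [split; [exact I | auto] |].
    simpl; unfold R_dist; rewrite Rminus_0_r; exact Hx. }
  unfold R_dist in Hdist. apply Rabs_def2 in Hdist. lra.
Qed.

Lemma near0_gt_of_continuity (f : R -> R) (v : R) :
  continuity_pt f 0 -> v < f 0 -> near0 (fun x => v < f x).
Proof.
  intros Hc Hv.
  apply (near0_impl (fun x => - f x < - v)); [|intros; lra].
  apply (near0_lt_of_continuity (fun x => - f x)); [now apply continuity_pt_opp | lra].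
Qed.

(** * The hypergeometric system *)

Lemma poch_pos b n : 0 < b -> 0 < poch b n.
Proof.
  intros Hb; induction n as [|n IH]; simpl; [lra|].
  apply Rmult_lt_0_compat; [exact IH|]. pose proof (pos_INR n); lra.
Qed.

Lemma hyp32_coef_0 a1 a2 a3 b1 b2 : hyp32_coef a1 a2 a3 b1 b2 0 = 1.
Proof. unfold hyp32_coef; simpl; field. Qed.

Lemma hyp32_coef_succ a1 a2 a3 b1 b2 n : 0 < b1 -> 0 < b2 ->
  hyp32_coef a1 a2 a3 b1 b2 (S n) * ((INR n + 1) * (INR n + b1) * (INR n + b2)) =
  hyp32_coef a1 a2 a3 b1 b2 n * ((INR n + a1) * (INR n + a2) * (INR n + a3)).
Proof.
  intros Hb1 Hb2. unfold hyp32_coef. simpl poch.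
  rewrite fact_simpl, mult_INR, S_INR.
  pose proof (poch_pos b1 n Hb1). pose proof (poch_pos b2 n Hb2).
  pose proof (INR_fact_lt_0 n). pose proof (pos_INR n).
  field. repeat split; lra.
Qed.

Lemma hyp32_coef_bounded a1 a2 a3 b1 b2 : 0 < b1 -> 0 < b2 ->
  (forall n, Rabs ((INR n + a1) * (INR n + a2) * (INR n + a3)) <=
             (INR n + 1) * (INR n + b1) * (INR n + b2)) ->
  forall n, Rabs (hyp32_coef a1 a2 a3 b1 b2 n) <= 1.
Proof.
  intros Hb1 Hb2 HU n. induction n as [|n IH].
  - rewrite hyp32_coef_0, Rabs_R1; lra.
  - pose proof (hyp32_coef_succ a1 a2 a3 b1 b2 n Hb1 Hb2) as Hrec.
    specialize (HU n). pose proof (pos_INR n).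
    set (T := (INR n + 1) * (INR n + b1) * (INR n + b2)) in *.
    assert (HT : 0 < T) by (unfold T; repeat apply Rmult_lt_0_compat; lra).
    apply (Rmult_le_reg_r T); [exact HT|].
    rewrite <- (Rabs_pos_eq T) at 1 by lra.
    rewrite <- Rabs_mult, Hrec, Rabs_mult, Rmult_1_l.
    rewrite <- (Rmult_1_l T).
    apply Rmult_le_compat; auto using Rabs_pos.
Qed.

Lemma CV_radius_ge_1 (c : nat -> R) :
  (forall n, Rabs (c n) <= 1) -> Rbar_le (Finite 1) (CV_radius c).
Proof.
  intros Hc. apply CV_radius_bounded.
  exists 1. intros n. rewrite pow1, Rmult_1_r. apply Hc.
Qed.

(* The coefficients of theta^j (sum c_n z^n), where theta = z d/dz. *)
Definition theta_coef (c : nat -> R) (j n : nat) : R := INR n ^ j * c n.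

Lemma theta_coef_succ c j n : theta_coef c (S j) n = PS_incr_1 (PS_derive (theta_coef c j)) n.
Proof.
  destruct n; unfold theta_coef, PS_derive, PS_incr_1; simpl; [unfold zero; simpl; ring|].
  rewrite <- S_INR; ring.
Qed.

Section ThetaSeries.
Variable c : nat -> R.
Hypothesis Hc : Rbar_le (Finite 1) (CV_radius c).

Lemma CV_radius_theta_coef j : Rbar_le (Finite 1) (CV_radius (theta_coef c j)).
Proof.
  induction j as [|j IH].
  - rewrite (CV_radius_ext _ c); [exact Hc|]. intros n; unfold theta_coef; simpl; ring.
  - rewrite (CV_radius_ext _ _ (theta_coef_succ c j)), CV_radius_incr_1, CV_radius_derive.
    exact IH.
Qed.

Lemma ex_pseries_theta_coef j z : Rabs z < 1 -> ex_pseries (theta_coef c j) z.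
Proof.
  intros Hz; apply CV_radius_inside.
  eapply Rbar_lt_le_trans; [|apply CV_radius_theta_coef]. exact Hz.
Qed.

Lemma is_derive_theta_series j z : Rabs z < 1 ->
  is_derive (PSeries (theta_coef c j)) z (PSeries (PS_derive (theta_coef c j)) z) /\
  z * PSeries (PS_derive (theta_coef c j)) z = PSeries (theta_coef c (S j)) z.
Proof.
  intros Hz; split.
  - apply is_derive_PSeries.
    eapply Rbar_lt_le_trans; [|apply CV_radius_theta_coef]. exact Hz.
  - rewrite <- PSeries_incr_1. apply PSeries_ext; intros n; rewrite theta_coef_succ; reflexivity.
Qed.

Lemma PSeries_theta_cubic z (q0 q1 q2 q3 : R) : Rabs z < 1 ->
  PSeries (fun n => (q0 + q1 * INR n + q2 * INR n ^ 2 + q3 * INR n ^ 3) * c n) z =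
  q0 * PSeries (theta_coef c 0) z + q1 * PSeries (theta_coef c 1) z
  + q2 * PSeries (theta_coef c 2) z + q3 * PSeries (theta_coef c 3) z.
Proof.
  intros Hz.
  set (u j q := PS_scal q (theta_coef c j)).
  assert (E : forall j q, ex_pseries (u j q) z)
    by (intros; apply ex_pseries_scal; [apply Rmult_comm | apply ex_pseries_theta_coef; exact Hz]).
  rewrite (PSeries_ext _ (PS_plus (PS_plus (PS_plus (u 0%nat q0) (u 1%nat q1)) (u 2%nat q2)) (u 3%nat q3))).
  2:{ intros n; unfold u, PS_plus, PS_scal, theta_coef, plus, scal; simpl;
      unfold mult; simpl. ring. }
  assert (E01 := ex_pseries_plus _ _ _ (E 0%nat q0) (E 1%nat q1)).
  assert (E012 := ex_pseries_plus _ _ _ E01 (E 2%nat q2)).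
  rewrite (PSeries_plus _ _ z E012 (E 3%nat q3)), (PSeries_plus _ _ z E01 (E 2%nat q2)),
    (PSeries_plus _ _ z (E 0%nat q0) (E 1%nat q1)).
  unfold u.
  rewrite !PSeries_scal. reflexivity.
Qed.

End ThetaSeries.

Lemma hyp32_theta_ode a1 a2 a3 b1 b2 z : 0 < b1 -> 0 < b2 ->
  let c := hyp32_coef a1 a2 a3 b1 b2 in
  Rbar_le (Finite 1) (CV_radius c) -> Rabs z < 1 ->
  let e1 := 1 - b1 in let e2 := 1 - b2 in
  let s j := PSeries (theta_coef c j) z in
  s 3%nat - (e1 + e2) * s 2%nat + e1 * e2 * s 1%nat =
  z * (s 3%nat + (a1 + a2 + a3) * s 2%nat + (a1 * a2 + a1 * a3 + a2 * a3) * s 1%nat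
       + a1 * a2 * a3 * s 0%nat).
Proof.
  intros Hb1 Hb2 c Hr Hz e1 e2 s; unfold s.
  transitivity (PSeries (fun n => (0 + e1 * e2 * INR n + (- (e1 + e2)) * INR n ^ 2 + 1 * INR n ^ 3) * c n) z).
  { rewrite PSeries_theta_cubic by auto. ring. }
  rewrite (PSeries_ext _ (PS_incr_1 (fun n => (a1 * a2 * a3 + (a1 * a2 + a1 * a3 + a2 * a3) * INR n
       + (a1 + a2 + a3) * INR n ^ 2 + 1 * INR n ^ 3) * c n))).
  - rewrite PSeries_incr_1, PSeries_theta_cubic by auto. ring.
  - intros [|n]; simpl PS_incr_1.
    + simpl; unfold zero; simpl; ring.
    + unfold c; rewrite S_INR.
      transitivity (hyp32_coef a1 a2 a3 b1 b2 (S n) * ((INR n + 1) * (INR n + b1) * (INR n + b2))).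
      { unfold e1, e2; ring. }
      rewrite hyp32_coef_succ by auto. ring.
Qed.

Definition pick3 {A : Type} (u0 u1 u2 : A) (k : nat) : A :=
  match k with 0%nat => u0 | 1%nat => u1 | _ => u2 end.

Definition sum3 (f : nat -> R) : R := f 0%nat + f 1%nat + f 2%nat.

Lemma sum3_nonneg (f : nat -> R) : (forall k, 0 <= f k) -> 0 <= sum3 f.
Proof.
  intros Hf. unfold sum3.
  pose proof (Hf 0%nat); pose proof (Hf 1%nat); pose proof (Hf 2%nat); lra.
Qed.

(* The local exponents at z = 0 are e_0 = 0, e_1, e_2.  Given s_j = theta^j F, [frob e1 e2 k]
   applies to F the product of the two factors among theta, theta - e1, theta - e2 other than
   theta - e_k; it is the component of F of exponent e_k. *)
Definition frob (e1 e2 : R) (k : nat) (s0 s1 s2 : R) : R :=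
  pick3 (s2 - (e1 + e2) * s1 + e1 * e2 * s0) (s2 - e2 * s1) (s2 - e1 * s1) k.

Definition frob_exp (e1 e2 : R) : nat -> R := pick3 0 e1 e2.

Definition frob_weight (e1 e2 : R) : nat -> R :=
  pick3 (/ (e1 * e2)) (/ (e1 * (e1 - e2))) (/ (e2 * (e2 - e1))).

Definition frob_mu (a1 a2 a3 e1 e2 : R) (k : nat) : R :=
  let t := frob_exp e1 e2 k in (t + a1) * (t + a2) * (t + a3) * frob_weight e1 e2 k.

Lemma frob_recombine e1 e2 s0 s1 s2 : e1 <> 0 -> e2 <> 0 -> e1 <> e2 ->
  sum3 (fun k => frob_weight e1 e2 k * frob e1 e2 k s0 s1 s2) = s0.
Proof.
  intros H1 H2 H12. unfold sum3, frob_weight, frob; simpl.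
  field; repeat split; auto; intro; apply H12; lra.
Qed.

Lemma frob_system a1 a2 a3 e1 e2 z s0 s1 s2 s3 d0 d1 d2 k :
  e1 <> 0 -> e2 <> 0 -> e1 <> e2 -> z <> 1 ->
  z * d0 = s1 -> z * d1 = s2 -> z * d2 = s3 ->
  s3 - (e1 + e2) * s2 + e1 * e2 * s1 =
  z * (s3 + (a1 + a2 + a3) * s2 + (a1 * a2 + a1 * a3 + a2 * a3) * s1 + a1 * a2 * a3 * s0) ->
  z * frob e1 e2 k d0 d1 d2 = frob_exp e1 e2 k * frob e1 e2 k s0 s1 s2 +
    z / (1 - z) * sum3 (fun j => frob_mu a1 a2 a3 e1 e2 j * frob e1 e2 j s0 s1 s2).
Proof.
  intros H1 H2 H12 Hz E0 E1 E2 Hode.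
  assert (e1 - e2 <> 0) by (intro; apply H12; lra).
  assert (e2 - e1 <> 0) by (intro; apply H12; lra).
  assert (S3 : s3 = ((e1 + e2) * s2 - e1 * e2 * s1 + z * ((a1 + a2 + a3) * s2 +
      (a1 * a2 + a1 * a3 + a2 * a3) * s1 + a1 * a2 * a3 * s0)) / (1 - z))
    by (field_simplify_eq; [lra | lra]).
  assert (Hlin : z * frob e1 e2 k d0 d1 d2 = frob e1 e2 k (z * d0) (z * d1) (z * d2))
    by (destruct k as [|[|k]]; simpl; ring).
  rewrite Hlin, E0, E1, E2, S3.
  unfold sum3, frob_mu, frob_weight, frob_exp, frob.
  destruct k as [|[|k]]; simpl; field; repeat split; auto; lra.
Qed.

Lemma is_derive_frob e1 e2 k (f0 f1 f2 : R -> R) d0 d1 d2 z :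
  is_derive f0 z d0 -> is_derive f1 z d1 -> is_derive f2 z d2 ->
  is_derive (fun t => frob e1 e2 k (f0 t) (f1 t) (f2 t)) z (frob e1 e2 k d0 d1 d2).
Proof.
  intros D0 D1 D2. destruct k as [|[|k]]; simpl.
  - apply (is_derive_plus (fun t => f2 t - (e1 + e2) * f1 t) (fun t => e1 * e2 * f0 t));
      [apply (is_derive_minus f2 (fun t => (e1 + e2) * f1 t)); [|apply is_derive_scal] |
       apply is_derive_scal]; assumption.
  - apply (is_derive_minus f2 (fun t => e2 * f1 t)); [|apply is_derive_scal]; assumption.
  - apply (is_derive_minus f2 (fun t => e1 * f1 t)); [|apply is_derive_scal]; assumption.
Qed.

Section Hyp32Frobenius.

Variables a1 a2 a3 b1 b2 : R.
Hypothesis Hb1 : 0 < b1.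
Hypothesis Hb2 : 0 < b2.
Hypothesis Hcoef : forall n, Rabs ((INR n + a1) * (INR n + a2) * (INR n + a3)) <=
                             (INR n + 1) * (INR n + b1) * (INR n + b2).
Hypothesis He1 : 1 - b1 <> 0.
Hypothesis He2 : 1 - b2 <> 0.
Hypothesis He12 : 1 - b1 <> 1 - b2.

Definition hyp32_frob (k : nat) (z : R) : R :=
  let s j := PSeries (theta_coef (hyp32_coef a1 a2 a3 b1 b2) j) z in
  frob (1 - b1) (1 - b2) k (s 0%nat) (s 1%nat) (s 2%nat).

Definition hyp32_frob_deriv (k : nat) (z : R) : R :=
  let ds j := PSeries (PS_derive (theta_coef (hyp32_coef a1 a2 a3 b1 b2) j)) z in
  frob (1 - b1) (1 - b2) k (ds 0%nat) (ds 1%nat) (ds 2%nat).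

Lemma CV_radius_hyp32_coef : Rbar_le (Finite 1) (CV_radius (hyp32_coef a1 a2 a3 b1 b2)).
Proof. apply CV_radius_ge_1, hyp32_coef_bounded; assumption. Qed.

Lemma hyp32_frob_at0 k : hyp32_frob k 0 = frob (1 - b1) (1 - b2) k 1 0 0.
Proof.
  assert (Hs0 : forall j, PSeries (theta_coef (hyp32_coef a1 a2 a3 b1 b2) j) 0 = pick3 1 0 0 j).
  { intros j. rewrite PSeries_0. unfold theta_coef. rewrite hyp32_coef_0.
    destruct j as [|[|j]]; simpl; ring. }
  unfold hyp32_frob. rewrite !Hs0. reflexivity.
Qed.

Lemma is_derive_hyp32_frob k z : Rabs z < 1 -> is_derive (hyp32_frob k) z (hyp32_frob_deriv k z).
Proof.
  intros Hz. pose proof CV_radius_hyp32_coef as Hr.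
  apply is_derive_frob; apply is_derive_theta_series; assumption.
Qed.

Lemma hyp32_frob_system k z : Rabs z < 1 ->
  z * hyp32_frob_deriv k z =
  frob_exp (1 - b1) (1 - b2) k * hyp32_frob k z +
  z / (1 - z) * sum3 (fun j => frob_mu a1 a2 a3 (1 - b1) (1 - b2) j * hyp32_frob j z).
Proof.
  intros Hz. assert (z <> 1) by (intros ->; rewrite Rabs_R1 in Hz; lra).
  pose proof CV_radius_hyp32_coef as Hr.
  apply (frob_system _ _ _ _ _ _ _ _ _ (PSeries (theta_coef (hyp32_coef a1 a2 a3 b1 b2) 3) z));
    try assumption; try apply (is_derive_theta_series _ Hr); try assumption.
  apply hyp32_theta_ode; assumption.
Qed.

Lemma hyp32_frob_recombine z :
  sum3 (fun k => frob_weight (1 - b1) (1 - b2) k * hyp32_frob k z) =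
  PSeries (hyp32_coef a1 a2 a3 b1 b2) z.
Proof.
  unfold hyp32_frob. rewrite frob_recombine by assumption.
  apply PSeries_ext; intros n; unfold theta_coef; simpl; ring.
Qed.

End Hyp32Frobenius.

Lemma hyp32_sum_PSeries a1 a2 a3 b1 b2 z :
  Rbar_lt (Finite (Rabs z)) (CV_radius (hyp32_coef a1 a2 a3 b1 b2)) ->
  hyp32_sum a1 a2 a3 b1 b2 z (PSeries (hyp32_coef a1 a2 a3 b1 b2) z).
Proof.
  intros Hz. unfold hyp32_sum. apply is_series_Reals.
  apply (is_pseries_R (hyp32_coef a1 a2 a3 b1 b2) z), PSeries_correct.
  now apply CV_radius_inside.
Qed.

(** * Uniqueness at a regular singular point *)

Lemma derive0_linear_bound (W : R -> R) (l : R) : W 0 = 0 -> is_derive W 0 l ->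
  near0 (fun h => Rabs (W h) <= (Rabs l + 1) * Rabs h).
Proof.
  intros H0 Hd. apply is_derive_Reals in Hd.
  destruct (Hd 1 Rlt_0_1) as [dl Hdl].
  exists dl; split; [apply cond_pos|]. intros h Hh.
  destruct (Req_dec h 0) as [->|Hn]; [rewrite H0, Rabs_R0; lra|].
  specialize (Hdl h Hn Hh). rewrite Rplus_0_l, H0, Rminus_0_r in Hdl.
  replace (W h) with ((W h / h - l) * h + l * h) by (field; exact Hn).
  eapply Rle_trans; [apply Rabs_triang|]. rewrite !Rabs_mult.
  pose proof (Rabs_pos h). pose proof (Rabs_pos l). nra.
Qed.

Lemma le_0_of_le_mult_small (a B x : R) : 0 < x -> 0 <= B ->
  (forall t, 0 < t < x -> a <= t * B) -> a <= 0.
Proof.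
  intros Hx HB Ha. destruct (Rle_lt_dec a 0) as [|Hpos]; [assumption|].
  set (t := Rmin (x / 2) (a / (2 * (B + 1)))).
  assert (Ht : 0 < t) by (apply Rmin_glb_lt; [lra | apply Rdiv_lt_0_compat; lra]).
  assert (Hta : t * (2 * (B + 1)) <= a).
  { apply (Rmult_le_reg_r (/ (2 * (B + 1)))); [apply Rinv_0_lt_compat; lra|].
    rewrite Rmult_assoc, Rinv_r, Rmult_1_r by lra. apply Rmin_r. }
  assert (t <= x / 2) by apply Rmin_l.
  specialize (Ha t ltac:(lra)). nra.
Qed.

(* s |-> s E(s) is nonincreasing since (s E)' = E + s E' <= 0, and bounded by s B. *)
Lemma decay_zero_right (E dE : R -> R) (d B : R) :
  (forall x, 0 < x < d -> is_derive E x (dE x) /\ 0 <= E x <= B /\ x * dE x <= - E x) ->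
  forall x, 0 < x < d -> E x = 0.
Proof.
  intros H x Hx.
  assert (HsE : forall s, 0 < s < d -> is_derive (fun s => s * E s) s (E s + s * dE s)).
  { intros s Hs. replace (E s + s * dE s) with (1 * E s + s * dE s) by ring.
    apply (is_derive_mult (fun s => s) E); [auto_derive; auto | apply H, Hs | exact Rmult_comm]. }
  destruct (H x Hx) as [_ [[HE0 HEB] _]].
  assert (Hmono : forall t, 0 < t < x -> x * E x <= t * B).
  { intros t Ht.
    destruct (MVT_gen (fun s => s * E s) t x (fun s => E s + s * dE s)) as [s [Hs Hmvt]].
    - intros y Hy. rewrite Rmin_left, Rmax_right in Hy by lra. apply HsE; lra.
    - intros y Hy. rewrite Rmin_left, Rmax_right in Hy by lra.
      apply continuity_pt_filterlim, (ex_derive_continuous (fun s => s * E s)).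
      eexists; apply HsE; lra.
    - rewrite Rmin_left, Rmax_right in Hs by lra.
      destruct (H s ltac:(lra)) as [_ [_ Hs3]]. destruct (H t ltac:(lra)) as [_ [[Ht1 Ht2] _]].
      assert (x * E x - t * E t <= 0) by (rewrite Hmvt; apply Rmult_le_0_r; lra).
      nra. }
  assert (HxE : x * E x <= 0) by (apply (le_0_of_le_mult_small _ B x); [lra | lra | exact Hmono]).
  assert (E x <= 0) by (apply (Rmult_le_reg_l x); lra).
  lra.
Qed.

Lemma decay_zero (E dE : R -> R) (d B : R) :
  (forall x, 0 < Rabs x < d -> is_derive E x (dE x) /\ 0 <= E x <= B /\ x * dE x <= - E x) ->
  forall x, 0 < Rabs x < d -> E x = 0.
Proof.
  intros H x Hx.
  destruct (Rlt_le_dec 0 x) as [Hp|Hn].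
  - rewrite Rabs_right in Hx by lra.
    apply (decay_zero_right E dE d B); [|lra].
    intros y Hy; apply H; rewrite Rabs_right; lra.
  - assert (x <> 0) by (intros ->; rewrite Rabs_R0 in Hx; lra).
    rewrite Rabs_left in Hx by lra.
    replace x with (- (- x)) by ring.
    apply (decay_zero_right (fun s => E (- s)) (fun s => - dE (- s)) d B); [|lra].
    intros y Hy. destruct (H (- y)) as [HD [HB HdE]]; [rewrite Rabs_left; lra|].
    split; [|split; [exact HB | lra]].
    replace (- dE (- y)) with (-1 * dE (- y)) by ring.
    apply (is_derive_comp E (fun s => - s)); [exact HD | auto_derive; auto].
Qed.

Lemma sum3_sq_eq0 (y : nat -> R) k : (k <= 2)%nat -> sum3 (fun j => y j * y j) = 0 -> y k = 0.
Proof.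
  intros Hk. unfold sum3.
  pose proof (Rle_0_sqr (y 0%nat)); pose proof (Rle_0_sqr (y 1%nat));
  pose proof (Rle_0_sqr (y 2%nat)); unfold Rsqr in *.
  intros Hsum; apply Rsqr_0_uniq; unfold Rsqr.
  destruct k as [|[|[|k]]]; lra || lia.
Qed.

Lemma Rabs_mult_le_half_sq (a b : R) : Rabs (a * b) <= (a * a + b * b) / 2.
Proof.
  pose proof (Rle_0_sqr (a - b)); pose proof (Rle_0_sqr (a + b)); unfold Rsqr in *.
  destruct (Rcase_abs (a * b)); [rewrite Rabs_left | rewrite Rabs_right]; lra.
Qed.

Lemma Rabs_sum3_mult_le (y m : nat -> R) :
  Rabs (sum3 y * sum3 (fun k => m k * y k)) <=
  3 * sum3 (fun k => Rabs (m k)) * sum3 (fun k => y k * y k).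
Proof.
  set (E := sum3 (fun k => y k * y k)).
  assert (Hyy : forall j k, (j <= 2)%nat -> (k <= 2)%nat -> Rabs (y j * y k) <= E).
  { intros j k Hj Hk. eapply Rle_trans; [apply Rabs_mult_le_half_sq|].
    unfold E, sum3. pose proof (Rle_0_sqr (y 0%nat)); pose proof (Rle_0_sqr (y 1%nat));
    pose proof (Rle_0_sqr (y 2%nat)); unfold Rsqr in *.
    destruct j as [|[|[|j]]]; destruct k as [|[|[|k]]]; lra || lia. }
  assert (Hrow : forall k, (k <= 2)%nat -> Rabs (m k * (sum3 y * y k)) <= Rabs (m k) * (3 * E)).
  { intros k Hk. rewrite Rabs_mult. apply Rmult_le_compat_l; [apply Rabs_pos|].
    unfold sum3; rewrite !Rmult_plus_distr_r.
    pose proof (Hyy 0%nat k ltac:(lia) Hk); pose proof (Hyy 1%nat k ltac:(lia) Hk);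
    pose proof (Hyy 2%nat k ltac:(lia) Hk).
    pose proof (Rabs_triang (y 0%nat * y k + y 1%nat * y k) (y 2%nat * y k));
    pose proof (Rabs_triang (y 0%nat * y k) (y 1%nat * y k)); lra. }
  replace (sum3 y * sum3 (fun k => m k * y k)) with
    (m 0%nat * (sum3 y * y 0%nat) + m 1%nat * (sum3 y * y 1%nat) + m 2%nat * (sum3 y * y 2%nat))
    by (unfold sum3; ring).
  pose proof (Hrow 0%nat ltac:(lia)); pose proof (Hrow 1%nat ltac:(lia)); pose proof (Hrow 2%nat ltac:(lia)).
  pose proof (Rabs_triang (m 0%nat * (sum3 y * y 0%nat) + m 1%nat * (sum3 y * y 1%nat))
                          (m 2%nat * (sum3 y * y 2%nat))).
  pose proof (Rabs_triang (m 0%nat * (sum3 y * y 0%nat)) (m 1%nat * (sum3 y * y 1%nat))).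
  change (sum3 (fun k => Rabs (m k))) with (Rabs (m 0%nat) + Rabs (m 1%nat) + Rabs (m 2%nat)).
  lra.
Qed.

(* The constants are tuned so that 2 * 15/16 * (4/7 - 1/28) > 1. *)
Lemma lyapunov_step (y dy e m : nat -> R) (x kap rho : R) :
  (forall k, e k <= 3/7) -> 15/16 <= kap ->
  Rabs rho * (3 * sum3 (fun k => Rabs (m k))) <= 1/28 ->
  (forall k, x * dy k = kap * ((e k - 1) * y k + rho * sum3 (fun j => m j * y j))) ->
  x * (2 * sum3 (fun k => y k * dy k)) <= - sum3 (fun k => y k * y k).
Proof.
  intros He Hkap Hrho Hdy.
  set (E := sum3 (fun k => y k * y k)).
  set (S := sum3 y * sum3 (fun j => m j * y j)).
  assert (HE : 0 <= E) by (apply sum3_nonneg; intros; apply Rle_0_sqr).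
  assert (Hx : x * (2 * sum3 (fun k => y k * dy k)) =
               2 * kap * (sum3 (fun k => (e k - 1) * (y k * y k)) + rho * S)).
  { transitivity (2 * sum3 (fun k => y k * (x * dy k))); [unfold sum3; ring|].
    unfold sum3; rewrite !Hdy; unfold S, sum3; ring. }
  assert (Hdiag : sum3 (fun k => (e k - 1) * (y k * y k)) <= - (4/7) * E).
  { assert (Hk : forall k, (e k - 1) * (y k * y k) <= - (4/7) * (y k * y k))
      by (intros k; apply Rmult_le_compat_r; [apply Rle_0_sqr | specialize (He k); lra]).
    pose proof (Hk 0%nat); pose proof (Hk 1%nat); pose proof (Hk 2%nat).
    unfold E, sum3 in *; lra. }
  assert (Hcross : rho * S <= 1/28 * E).
  { apply Rle_trans with (Rabs (rho * S)); [apply Rle_abs|].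
    rewrite Rabs_mult.
    apply Rle_trans with (Rabs rho * (3 * sum3 (fun k => Rabs (m k))) * E).
    - rewrite Rmult_assoc.
      apply Rmult_le_compat_l; [apply Rabs_pos | apply Rabs_sum3_mult_le].
    - apply Rmult_le_compat_r; assumption. }
  assert (Hkap0 : 0 <= 2 * kap) by lra.
  assert (15/16 * E <= kap * E) by (apply Rmult_le_compat_r; assumption).
  rewrite Hx. fold E.
  apply Rle_trans with (2 * kap * (- (15/28) * E)); [apply Rmult_le_compat_l; lra | lra].
Qed.

Lemma is_derive_sum3_sq (f df : nat -> R -> R) x :
  (forall k, is_derive (f k) x (df k x)) ->
  is_derive (fun t => sum3 (fun k => f k t * f k t)) x (2 * sum3 (fun k => f k x * df k x)).
Proof.
  intros Hf.
  assert (Hsq : forall k, is_derive (fun t => f k t * f k t) x (df k x * f k x + f k x * df k x))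
    by (intros k; apply (is_derive_mult (f k) (f k)); [apply Hf | apply Hf | exact Rmult_comm]).
  unfold sum3.
  replace (2 * (f 0%nat x * df 0%nat x + f 1%nat x * df 1%nat x + f 2%nat x * df 2%nat x)) with
    ((df 0%nat x * f 0%nat x + f 0%nat x * df 0%nat x) + (df 1%nat x * f 1%nat x + f 1%nat x * df 1%nat x)
     + (df 2%nat x * f 2%nat x + f 2%nat x * df 2%nat x)) by ring.
  apply (is_derive_plus (fun t => f 0%nat t * f 0%nat t + f 1%nat t * f 1%nat t)); [|apply Hsq].
  apply (is_derive_plus (fun t => f 0%nat t * f 0%nat t)); apply Hsq.
Qed.

Lemma div_sq_le (a p x K c : R) : 0 < c -> 0 <= K -> p <> 0 ->
  Rabs a <= K * Rabs x -> c * Rabs x <= Rabs p -> (a / p) * (a / p) <= K * K / (c * c).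
Proof.
  intros Hc HK Hp Ha Hlow. pose proof (Rabs_pos x).
  assert (Hq : Rabs (a / p) * c <= K).
  { rewrite Rabs_div by exact Hp.
    apply (Rmult_le_reg_r (Rabs p)); [now apply Rabs_pos_lt|].
    replace (Rabs a / Rabs p * c * Rabs p) with (Rabs a * c) by (field; now apply Rabs_no_R0).
    nra. }
  assert (Hqc : 0 <= Rabs (a / p) * c) by (apply Rmult_le_pos; [apply Rabs_pos | lra]).
  rewrite <- (Rabs_pos_eq ((a / p) * (a / p))) by apply Rle_0_sqr. rewrite Rabs_mult.
  apply (Rmult_le_reg_r (c * c)); [nra|].
  replace (K * K / (c * c) * (c * c)) with (K * K) by (field; lra).
  replace (Rabs (a / p) * Rabs (a / p) * (c * c)) with ((Rabs (a / p) * c) * (Rabs (a / p) * c)) by ring.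
  now apply Rmult_le_compat.
Qed.

(* y_k = W_k / psi is bounded because W_k(0) = 0 and psi vanishes only to first order at 0;
   E = sum_k y_k^2 then satisfies x E' <= - E. *)
Lemma singular_system_zero (psi dpsi : R -> R) (W dW : nat -> R -> R) (e m : nat -> R) (c d : R) :
  0 < c -> 0 < d -> (forall k, e k <= 3/7) -> (forall k, W k 0 = 0) ->
  (forall k x, Rabs x < d -> is_derive (W k) x (dW k x)) ->
  (forall x, 0 < Rabs x < d ->
     is_derive psi x (dpsi x) /\ psi x <> 0 /\ 15/16 <= x * dpsi x / psi x /\
     Rabs (psi x / (1 - psi x)) * (3 * sum3 (fun k => Rabs (m k))) <= 1/28 /\
     c * Rabs x <= Rabs (psi x) /\
     forall k, psi x * dW k x =
               dpsi x * (e k * W k x + psi x / (1 - psi x) * sum3 (fun j => m j * W j x))) ->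
  near0 (fun x => forall k, (k <= 2)%nat -> W k x = 0).
Proof.
  intros Hc Hd He HW0 HdW Hsys.
  set (K k := Rabs (dW k 0) + 1).
  assert (HK : forall k, 0 <= K k) by (intros k; pose proof (Rabs_pos (dW k 0)); unfold K; lra).
  assert (Hnear : near0 (fun x => Rabs x < d /\
                         forall k, (k <= 2)%nat -> Rabs (W k x) <= K k * Rabs x)).
  { apply near0_and; [now apply near0_ball|]. apply near0_forall3; intros k _.
    apply derive0_linear_bound; [apply HW0 | apply HdW; rewrite Rabs_R0; exact Hd]. }
  destruct Hnear as [d' [Hd' Hnear]].
  set (y k x := W k x / psi x).
  set (dy k x := (dW k x * psi x - W k x * dpsi x) / psi x ^ 2).
  assert (HE : forall x, 0 < Rabs x < d' -> sum3 (fun k => y k x * y k x) = 0).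
  { apply (decay_zero _ (fun x => 2 * sum3 (fun k => y k x * dy k x)) d'
             (sum3 (fun k => K k * K k) / (c * c))).
    intros x Hx. destruct (Hnear x ltac:(lra)) as [Hxd HWx].
    destruct (Hsys x ltac:(lra)) as [Dpsi [Hpsi [Hkap [Hrho [Hlow Hrel]]]]].
    split; [|split; [split|]].
    - apply is_derive_sum3_sq; intros k.
      apply is_derive_div; [apply HdW; exact Hxd | exact Dpsi | exact Hpsi].
    - apply sum3_nonneg; intros; apply Rle_0_sqr.
    - assert (Hy : forall k, (k <= 2)%nat -> y k x * y k x <= K k * K k / (c * c))
        by (intros k Hk; apply (div_sq_le _ _ x); auto).
      pose proof (Hy 0%nat ltac:(lia)); pose proof (Hy 1%nat ltac:(lia)); pose proof (Hy 2%nat ltac:(lia)).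
      unfold sum3 at 2; unfold sum3.
      replace ((K 0%nat * K 0%nat + K 1%nat * K 1%nat + K 2%nat * K 2%nat) / (c * c)) with
        (K 0%nat * K 0%nat / (c * c) + K 1%nat * K 1%nat / (c * c) + K 2%nat * K 2%nat / (c * c))
        by (field; lra).
      lra.
    - apply (lyapunov_step (fun k => y k x) (fun k => dy k x) e m x
               (x * dpsi x / psi x) (psi x / (1 - psi x))); auto.
      intros k. set (rho := psi x / (1 - psi x)) in *.
      unfold dy, y. rewrite (Rmult_comm (dW k x)), Hrel.
      unfold sum3; field. exact Hpsi. }
  exists d'; split; [exact Hd'|]. intros x Hx k Hk.
  destruct (Req_dec x 0) as [->|Hx0]; [apply HW0|].
  assert (Hpsi : psi x <> 0)
    by (apply Hsys; split; [now apply Rabs_pos_lt | apply Hnear, Hx]).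
  replace (W k x) with (y k x * psi x) by (unfold y; field; exact Hpsi).
  rewrite (sum3_sq_eq0 (fun j => y j x) k Hk); [ring|].
  apply HE; split; [now apply Rabs_pos_lt | exact Hx].
Qed.

Theorem hyp32_sum_of_pullback_system (a1 a2 a3 b1 b2 : R) (psi dpsi h : R -> R)
    (H dH : nat -> R -> R) (c d : R) :
  let e1 := 1 - b1 in let e2 := 1 - b2 in
  let mu := frob_mu a1 a2 a3 e1 e2 in
  0 < b1 -> 0 < b2 -> e1 <> 0 -> e2 <> 0 -> e1 <> e2 -> e1 <= 3/7 -> e2 <= 3/7 ->
  (forall n, Rabs ((INR n + a1) * (INR n + a2) * (INR n + a3)) <=
             (INR n + 1) * (INR n + b1) * (INR n + b2)) ->
  0 < c -> 0 < d -> psi 0 = 0 -> (forall k, H k 0 = frob e1 e2 k 1 0 0) ->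
  (forall x, Rabs x < d ->
     is_derive psi x (dpsi x) /\ Rabs (psi x) < 1 /\ (forall k, is_derive (H k) x (dH k x)) /\
     h x = sum3 (fun k => frob_weight e1 e2 k * H k x)) ->
  (forall x, 0 < Rabs x < d ->
     psi x <> 0 /\ 15/16 <= x * dpsi x / psi x /\
     Rabs (psi x / (1 - psi x)) * (3 * sum3 (fun k => Rabs (mu k))) <= 1/28 /\
     c * Rabs x <= Rabs (psi x) /\
     forall k, psi x * dH k x =
               dpsi x * (frob_exp e1 e2 k * H k x + psi x / (1 - psi x) * sum3 (fun j => mu j * H j x))) ->
  near0 (fun x => hyp32_sum a1 a2 a3 b1 b2 (psi x) (h x)).
Proof.
  cbv zeta. intros Hb1 Hb2 He1 He2 He12 Le1 Le2 Hcoef Hc Hd Hpsi0 HH0 Hreg Hrel.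
  set (F := hyp32_frob a1 a2 a3 b1 b2).
  set (W k x := F k (psi x) - H k x).
  set (dW k x := hyp32_frob_deriv a1 a2 a3 b1 b2 k (psi x) * dpsi x - dH k x).
  assert (HW : near0 (fun x => forall k, (k <= 2)%nat -> W k x = 0)).
  { apply (singular_system_zero psi dpsi W dW (frob_exp (1 - b1) (1 - b2))
             (frob_mu a1 a2 a3 (1 - b1) (1 - b2)) c d); try assumption.
    - intros [|[|k]]; simpl; lra.
    - intros k; unfold W, F. rewrite Hpsi0, hyp32_frob_at0, HH0; ring.
    - intros k x Hx. destruct (Hreg x Hx) as [Dpsi [Hpsi1 [DH _]]].
      apply (is_derive_minus (fun t => F k (psi t)) (H k)); [|apply DH].
      rewrite Rmult_comm. apply (is_derive_comp (F k) psi); [|exact Dpsi].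
      apply is_derive_hyp32_frob; assumption.
    - intros x Hx. destruct (Hreg x ltac:(lra)) as [Dpsi [Hpsi1 _]].
      destruct (Hrel x Hx) as [Hpsi [Hkap [Hrho [Hlow HrelH]]]].
      do 5 (split; [assumption|]). intros k. unfold W, dW.
      transitivity (dpsi x * (psi x * hyp32_frob_deriv a1 a2 a3 b1 b2 k (psi x)) - psi x * dH k x);
        [ring|].
      rewrite hyp32_frob_system, HrelH by assumption. unfold F, sum3; ring. }
  apply (near0_impl _ _ (near0_and _ _ (near0_ball d Hd) HW)).
  intros x [Hx HWx]. destruct (Hreg x Hx) as [_ [Hpsi1 [_ Hh]]].
  assert (HHF : forall k, (k <= 2)%nat -> H k x = F k (psi x))
    by (intros k Hk; specialize (HWx k Hk); unfold W in HWx; lra).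
  replace (h x) with (PSeries (hyp32_coef a1 a2 a3 b1 b2) (psi x)).
  - apply hyp32_sum_PSeries.
    eapply Rbar_lt_le_trans; [|apply CV_radius_hyp32_coef]; eassumption.
  - rewrite Hh, <- (hyp32_frob_recombine a1 a2 a3 b1 b2) by assumption.
    unfold sum3. rewrite !HHF by lia. reflexivity.
Qed.

(** * The map Phi3 *)

Definition Xp : zpoly := [0; 1]%Z.
Definition Xm1p : zpoly := [-1; 1]%Z.
Definition F1p : zpoly := [1; 5; -8; 1]%Z.
Definition G0p : zpoly := [1; -1; 1]%Z.
Definition G1p : zpoly := [1; -235; 1430; -1695; 270; 229; 1]%Z.
Definition Gp : zpoly := zmul G0p G1p.
Definition Phi3_num : zpoly := zscale 1728 (zmul (zmul Xp Xm1p) (zpow F1p 7)).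
Definition Phi3_den : zpoly := zpow Gp 3.

(* (G0 G1)^3 - 1728 x (x - 1) F1^7 = Np^2, and Np also appears in Phi3'. *)
Definition Np : zpoly :=
  [-1; -510; 14631; -80090; 218058; -316290; 253239; -131562; 70998; -37950; 8955; 522; -1]%Z.

Lemma zeval_X x : zeval Xp x = x. Proof. simpl; ring. Qed.
Lemma zeval_Xm1 x : zeval Xm1p x = x - 1. Proof. simpl; ring. Qed.
Lemma zeval_F1 x : zeval F1p x = F1 x. Proof. unfold F1; simpl; ring. Qed.
Lemma zeval_G0 x : zeval G0p x = G0 x. Proof. unfold G0; simpl; ring. Qed.
Lemma zeval_G1 x : zeval G1p x = G1 x. Proof. unfold G1; simpl; ring. Qed.
Lemma zeval_G x : zeval Gp x = G0 x * G1 x.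
Proof. unfold Gp; rewrite zeval_mul, zeval_G0, zeval_G1; reflexivity. Qed.

Lemma Phi3_ratio x : Phi3 x = zeval Phi3_num x / zeval Phi3_den x.
Proof.
  unfold Phi3_num, Phi3_den, Phi3.
  rewrite zeval_scale, !zeval_mul, !zeval_pow, zeval_X, zeval_Xm1, zeval_F1, zeval_G.
  simpl IZR. unfold Rdiv. rewrite Rpow_mult_distr. ring.
Qed.

Lemma Phi3_deriv_certificate :
  zeqb (zsub (zmul (zderiv Phi3_num) Phi3_den) (zmul Phi3_num (zderiv Phi3_den)))
       (zscale 1728 (zmul (zmul (zpow F1p 6) Np) (zmul Gp Gp))) = true.
Proof. vm_compute. reflexivity. Qed.

Lemma one_minus_Phi3_certificate : zeqb Phi3_den (zadd Phi3_num (zmul Np Np)) = true.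
Proof. vm_compute. reflexivity. Qed.

Definition dPhi3 (x : R) : R := 1728 * F1 x ^ 6 * zeval Np x / (G0 x * G1 x) ^ 4.

Lemma is_derive_Phi3 x : G0 x <> 0 -> G1 x <> 0 -> is_derive Phi3 x (dPhi3 x).
Proof.
  intros H0 H1.
  assert (HG : G0 x * G1 x <> 0) by (apply Rmult_integral_contrapositive; auto).
  assert (HQ : zeval Phi3_den x = (G0 x * G1 x) ^ 3)
    by (unfold Phi3_den; rewrite zeval_pow, zeval_G; reflexivity).
  apply (is_derive_ext (fun t => zeval Phi3_num t / zeval Phi3_den t));
    [intros t; symmetry; apply Phi3_ratio|].
  pose proof (zeqb_zeval _ _ x Phi3_deriv_certificate) as Hcert.
  rewrite zeval_sub, !zeval_mul, zeval_scale, !zeval_mul, zeval_pow, zeval_F1, zeval_G, HQ in Hcert.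
  simpl IZR in Hcert.
  replace (dPhi3 x) with
    ((zeval (zderiv Phi3_num) x * zeval Phi3_den x - zeval Phi3_num x * zeval (zderiv Phi3_den) x)
     / zeval Phi3_den x ^ 2).
  - apply is_derive_div; [apply is_derive_zeval | apply is_derive_zeval | rewrite HQ; now apply pow_nonzero].
  - rewrite HQ, Hcert. unfold dPhi3. field. split; assumption.
Qed.

Lemma one_minus_Phi3 x : G0 x <> 0 -> G1 x <> 0 ->
  1 - Phi3 x = zeval Np x ^ 2 / (G0 x * G1 x) ^ 3.
Proof.
  intros H0 H1.
  pose proof (zeqb_zeval _ _ x one_minus_Phi3_certificate) as Hcert.
  unfold Phi3_den in Hcert. rewrite zeval_add, zeval_pow, zeval_G, zeval_mul in Hcert.
  rewrite Phi3_ratio. unfold Phi3_den. rewrite zeval_pow, zeval_G.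
  replace (zeval Np x ^ 2) with ((G0 x * G1 x) ^ 3 - zeval Phi3_num x) by (rewrite Hcert; ring).
  field. split; assumption.
Qed.

Lemma continuity_pt_zratio p q x : zeval q x <> 0 -> continuity_pt (fun t => zeval p t / zeval q t) x.
Proof.
  intros Hq. apply continuity_pt_filterlim, (ex_derive_continuous (fun t => zeval p t / zeval q t)).
  eexists. apply is_derive_div; [apply is_derive_zeval | apply is_derive_zeval | exact Hq].
Qed.

(* x Phi3'(x) / Phi3(x) = Np / Kp *)
Definition Kp : zpoly := zmul Xm1p (zmul F1p Gp).

Lemma Phi3_near0 :
  near0 (fun x => 0 < G0 x /\ 0 < G1 x /\ 0 < F1 x /\ x < 1 /\ zeval Np x < 0 /\
                  Rabs (Phi3 x) < 1/1000 /\ Rabs x <= Rabs (Phi3 x) /\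
                  (x <> 0 -> 15/16 <= x * dPhi3 x / Phi3 x)).
Proof.
  assert (HQ0 : zeval Phi3_den 0 = 1) by (vm_compute; ring).
  assert (HK0 : zeval Kp 0 = -1) by (vm_compute; ring).
  assert (HN0 : zeval Np 0 = -1) by (vm_compute; ring).
  set (q := zscale 1728 (zmul Xm1p (zpow F1p 7))).
  assert (Hq : forall x, Phi3 x = x * (zeval q x / zeval Phi3_den x)).
  { intros x. rewrite Phi3_ratio. unfold Phi3_num, q.
    rewrite !zeval_scale, !zeval_mul, zeval_X. unfold Rdiv; ring. }
  assert (HG0 := near0_gt_of_continuity (zeval G0p) 0 (continuity_pt_zeval _ _) ltac:(vm_compute; lra)).
  assert (HG1 := near0_gt_of_continuity (zeval G1p) 0 (continuity_pt_zeval _ _) ltac:(vm_compute; lra)).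
  assert (HF1 := near0_gt_of_continuity (zeval F1p) 0 (continuity_pt_zeval _ _) ltac:(vm_compute; lra)).
  assert (HN := near0_lt_of_continuity (zeval Np) 0 (continuity_pt_zeval _ _) ltac:(lra)).
  assert (Hup := near0_lt_of_continuity _ (1/1000) (continuity_pt_zratio Phi3_num Phi3_den 0 ltac:(lra))
                   ltac:(vm_compute; lra)).
  assert (Hlo := near0_gt_of_continuity _ (-1/1000) (continuity_pt_zratio Phi3_num Phi3_den 0 ltac:(lra))
                   ltac:(vm_compute; lra)).
  assert (Hq0 : zeval q 0 = -1728) by (vm_compute; ring).
  assert (Hslope := near0_lt_of_continuity _ (-1) (continuity_pt_zratio q Phi3_den 0 ltac:(lra))
                   ltac:(cbv beta; rewrite Hq0, HQ0; lra)).
  assert (Hlog := near0_gt_of_continuity _ (15/16) (continuity_pt_zratio Np Kp 0 ltac:(lra))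
                   ltac:(cbv beta; rewrite HN0, HK0; lra)).
  pose proof (near0_and _ _ HG0 (near0_and _ _ HG1 (near0_and _ _ HF1 (near0_and _ _ (near0_ball 1 Rlt_0_1)
    (near0_and _ _ HN (near0_and _ _ Hup (near0_and _ _ Hlo (near0_and _ _ Hslope Hlog)))))))) as Hall.
  apply (near0_impl _ _ Hall); cbv beta.
  intros x [G0x [G1x [F1x [Hx1 [HNx [Hupx [Hlox [Hslx Hlogx]]]]]]]].
  rewrite zeval_G0 in G0x; rewrite zeval_G1 in G1x; rewrite zeval_F1 in F1x.
  apply Rabs_def2 in Hx1.
  do 5 (split; [lra|]). split; [rewrite Phi3_ratio; apply Rabs_def1; lra|].
  split.
  - rewrite Hq, Rabs_mult, (Rabs_left (_ / _)) by lra.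
    pose proof (Rabs_pos x); nra.
  - intros Hx0. replace (x * dPhi3 x / Phi3 x) with (zeval Np x / zeval Kp x); [lra|].
    unfold dPhi3, Phi3, Kp. rewrite !zeval_mul, zeval_Xm1, zeval_F1, zeval_G.
    field; repeat split; lra.
Qed.

(** * Candidate solutions along Phi3 *)

Definition radical (al be : R) (m : nat) (x : R) : R :=
  Rpower (1 - x) al * / F1 x ^ m * Rpower (G0 x) be * Rpower (G1 x) be.

Lemma is_derive_Rpower_comp (u : R -> R) (du a x : R) : 0 < u x -> is_derive u x du ->
  is_derive (fun t => Rpower (u t) a) x (Rpower (u x) a * (a * du / u x)).
Proof.
  intros Hu Hd. unfold Rpower.
  replace (exp (a * ln (u x)) * (a * du / u x)) with ((a * (du * / u x)) * exp (a * ln (u x)))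
    by (field; lra).
  apply (is_derive_comp exp (fun t => a * ln (u t))); [apply is_derive_exp|].
  apply is_derive_scal, (is_derive_comp ln u); [apply is_derive_ln; exact Hu | exact Hd].
Qed.

Definition logderiv_radical (Rl : zpoly) (x : R) : R :=
  zeval Rl x / (14 * ((x - 1) * F1 x * (G0 x * G1 x))).

(* [Rl] is 14 (x - 1) F1 G0 G1 times the logarithmic derivative of [radical al be m], with
   A = 14 al, B = 14 be, C = -14 m. *)
Definition radical_certificate (Rl : zpoly) (A B C : Z) : bool :=
  zeqb Rl (zadd (zscale A (zmul F1p Gp))
            (zmul Xm1p (zadd (zscale B (zmul F1p (zadd (zmul (zderiv G0p) G1p) (zmul G0p (zderiv G1p)))))
                             (zscale C (zmul Gp (zderiv F1p)))))).

Lemma is_derive_radical Rl A B C al be m x :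
  radical_certificate Rl A B C = true ->
  IZR A = 14 * al -> IZR B = 14 * be -> IZR C = - 14 * INR m ->
  x < 1 -> 0 < F1 x -> 0 < G0 x -> 0 < G1 x ->
  is_derive (radical al be m) x (radical al be m x * logderiv_radical Rl x).
Proof.
  intros Hcert HA HB HC Hx HF HG0 HG1.
  pose proof (zeqb_zeval _ _ x Hcert) as HRl.
  rewrite zeval_add, zeval_scale, !zeval_mul, zeval_add, !zeval_scale, !zeval_mul, zeval_add,
    !zeval_mul, zeval_Xm1, zeval_F1, zeval_G, zeval_G0, zeval_G1 in HRl.
  assert (DF : is_derive F1 x (zeval (zderiv F1p) x))
    by (apply (is_derive_ext (zeval F1p)); [apply zeval_F1 | apply is_derive_zeval]).
  assert (DG0 : is_derive G0 x (zeval (zderiv G0p) x))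
    by (apply (is_derive_ext (zeval G0p)); [apply zeval_G0 | apply is_derive_zeval]).
  assert (DG1 : is_derive G1 x (zeval (zderiv G1p) x))
    by (apply (is_derive_ext (zeval G1p)); [apply zeval_G1 | apply is_derive_zeval]).
  assert (D1 : is_derive (fun t => Rpower (1 - t) al) x (Rpower (1 - x) al * (al * (-1) / (1 - x))))
    by (apply is_derive_Rpower_comp; [lra | auto_derive; auto]).
  assert (D2 : is_derive (fun t => / F1 t ^ m) x
                 (- (INR m * zeval (zderiv F1p) x * F1 x ^ pred m) / (F1 x ^ m) ^ 2)).
  { apply (is_derive_ext (fun t => 1 / F1 t ^ m)); [intros t; apply Rmult_1_l|].
    replace (- (INR m * zeval (zderiv F1p) x * F1 x ^ pred m) / (F1 x ^ m) ^ 2) with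
      ((0 * F1 x ^ m - 1 * (INR m * zeval (zderiv F1p) x * F1 x ^ pred m)) / (F1 x ^ m) ^ 2)
      by (field; apply pow_nonzero; lra).
    apply is_derive_div; [auto_derive; auto | apply is_derive_pow, DF | apply pow_nonzero; lra]. }
  pose proof (is_derive_Rpower_comp _ _ be x HG0 DG0) as D3.
  pose proof (is_derive_Rpower_comp _ _ be x HG1 DG1) as D4.
  pose proof (is_derive_mult _ _ _ _ _ (is_derive_mult _ _ _ _ _
                (is_derive_mult _ _ _ _ _ D1 D2 Rmult_comm) D3 Rmult_comm) D4 Rmult_comm) as D.
  match type of D with is_derive _ _ ?l =>
    replace (radical al be m x * logderiv_radical Rl x) with l; [exact D|] end.
  match goal with |- ?l = ?r => change (@eq R l r) end.
  cbn -[zeval zderiv]. unfold radical, logderiv_radical. rewrite HRl, HA, HB, HC.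
  assert (F1 x ^ m <> 0) by (apply pow_nonzero; lra).
  destruct m as [|m]; simpl pred; [simpl INR | rewrite S_INR; simpl pow];
    field; repeat split; try lra; apply pow_nonzero; lra.
Qed.

Definition candidate (b : zpoly) (h : R -> R) (x : R) : R := zeval b x / (49 * zeval Np x ^ 3) * h x.

Definition dcandidate (b : zpoly) (h r : R -> R) (x : R) : R :=
  ((zeval (zderiv b) x * zeval Np x - 3 * zeval b x * zeval (zderiv Np) x) / (49 * zeval Np x ^ 4)
   + zeval b x / (49 * zeval Np x ^ 3) * r x) * h x.

Lemma is_derive_candidate b h r x : is_derive h x (h x * r x) -> zeval Np x <> 0 ->
  is_derive (candidate b h) x (dcandidate b h r x).
Proof.
  intros Dh HN.
  assert (HN3 : 49 * zeval Np x ^ 3 <> 0)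
    by (apply Rmult_integral_contrapositive; split; [lra | now apply pow_nonzero]).
  assert (DN : is_derive (fun t => 49 * zeval Np t ^ 3) x
                 (49 * (INR 3 * zeval (zderiv Np) x * zeval Np x ^ 2)))
    by (apply is_derive_scal, is_derive_pow, is_derive_zeval).
  pose proof (is_derive_mult _ _ _ _ _
                (is_derive_div _ _ _ _ _ (is_derive_zeval b x) DN HN3) Dh Rmult_comm) as D.
  match type of D with is_derive _ _ ?l => replace (dcandidate b h r x) with l; [exact D|] end.
  match goal with |- ?l = ?r => change (@eq R l r) end.
  cbn -[zeval zderiv INR]. unfold dcandidate. simpl INR. field. exact HN.
Qed.

Definition zlincomb3 (c : nat -> Z) (b : nat -> zpoly) : zpoly :=
  zadd (zscale (c 0%nat) (b 0%nat)) (zadd (zscale (c 1%nat) (b 1%nat)) (zscale (c 2%nat) (b 2%nat))).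

Lemma zeval_zlincomb3 c b x : zeval (zlincomb3 c b) x = sum3 (fun k => IZR (c k) * zeval (b k) x).
Proof. unfold zlincomb3, sum3. rewrite !zeval_add, !zeval_scale. ring. Qed.

(* The k-th equation  Phi3 H_k' = Phi3' (e_k H_k + rho sum_j mu_j H_j),  rho = Phi3 / (1 - Phi3),
   for H_j = candidate (b j) h with h'/h = logderiv_radical Rl, cleared of denominators;
   E_k = 14112 e_k and M_j = 1008 mu_j. *)
Definition system_certificate (Rl : zpoly) (b : nat -> zpoly) (E M : nat -> Z) (k : nat) : bool :=
  zeqb (zadd (zscale 14112 (zmul (zmul (zmul (zmul Xp Xm1p) F1p) Gp)
                                 (zsub (zmul (zderiv (b k)) Np) (zscale 3 (zmul (b k) (zderiv Np))))))
             (zscale 1008 (zmul Xp (zmul Rl (zmul (b k) Np)))))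
       (zadd (zscale (E k) (zmul (b k) (zmul Np Np)))
             (zscale 24192 (zmul (zmul (zmul Xp Xm1p) (zpow F1p 7)) (zlincomb3 M b)))).

Lemma candidate_system Rl b E M h x k :
  system_certificate Rl b E M k = true ->
  x <> 0 -> x - 1 <> 0 -> F1 x <> 0 -> G0 x <> 0 -> G1 x <> 0 -> zeval Np x <> 0 ->
  Phi3 x * dcandidate (b k) h (logderiv_radical Rl) x =
  dPhi3 x * (IZR (E k) / 14112 * candidate (b k) h x +
             Phi3 x / (1 - Phi3 x) * sum3 (fun j => IZR (M j) / 1008 * candidate (b j) h x)).
Proof.
  intros Hcert Hx Hx1 HF HG0 HG1 HN.
  pose proof (zeqb_zeval _ _ x Hcert) as Z.
  rewrite !zeval_add, !zeval_scale, !zeval_mul, zeval_sub, zeval_scale, !zeval_mul, zeval_pow,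
    zeval_zlincomb3, zeval_X, zeval_Xm1, zeval_F1, zeval_G in Z.
  assert (Hrho : Phi3 x / (1 - Phi3 x) = 1728 * x * (x - 1) * F1 x ^ 7 / zeval Np x ^ 2).
  { rewrite one_minus_Phi3 by assumption. unfold Phi3. field. repeat split; assumption. }
  rewrite Hrho. unfold Phi3, dPhi3, dcandidate, candidate, logderiv_radical, sum3 in *.
  set (n := zeval Np x) in *. set (n' := zeval (zderiv Np) x) in *.
  set (c := zeval (b k) x) in *. set (c' := zeval (zderiv (b k)) x) in *.
  set (r := zeval Rl x) in *.
  apply Rminus_diag_uniq.
  transitivity (1728 * F1 x ^ 6 * h x / (49 * 14112 * (G0 x * G1 x) ^ 4 * n ^ 4) *
    (14112 * (x * (x - 1) * F1 x * (G0 x * G1 x) * (c' * n - 3 * (c * n'))) + 1008 * (x * (r * (c * n))) -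
     (IZR (E k) * (c * (n * n)) + 24192 * (x * (x - 1) * F1 x ^ 7 *
       (IZR (M 0%nat) * zeval (b 0%nat) x + IZR (M 1%nat) * zeval (b 1%nat) x
        + IZR (M 2%nat) * zeval (b 2%nat) x))))).
  - field. repeat split; assumption.
  - rewrite Z. ring.
Qed.

Definition recombination_certificate (b : nat -> zpoly) (L : nat -> Z) (D : Z) : bool :=
  zeqb (zlincomb3 L b) (zscale D (zpow Np 3)).

Lemma Rpower_1_base a : Rpower 1 a = 1.
Proof. unfold Rpower. rewrite ln_1, Rmult_0_r. apply exp_0. Qed.

Lemma Rabs_div_one_minus_le (p : R) : Rabs p < 1/1000 -> Rabs (p / (1 - p)) <= 1/999.
Proof.
  intros Hp. apply Rabs_def2 in Hp.
  rewrite Rabs_div, (Rabs_right (1 - p)) by lra.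
  apply (Rmult_le_reg_r (1 - p)); [lra|].
  unfold Rdiv. rewrite Rmult_assoc, Rinv_l, Rmult_1_r by lra.
  unfold Rabs; destruct Rcase_abs; lra.
Qed.

Section Certificate.

Variables (a1 a2 a3 b1 b2 al be : R) (m : nat).
Variables (Rl : zpoly) (A B C : Z) (b : nat -> zpoly) (E M L : nat -> Z) (D : Z).

Hypothesis Hb : 0 < b1 /\ 0 < b2.
Hypothesis He : 1 - b1 <> 0 /\ 1 - b2 <> 0 /\ 1 - b1 <> 1 - b2 /\ 1 - b1 <= 3/7 /\ 1 - b2 <= 3/7.
Hypothesis Hcoef : forall n, Rabs ((INR n + a1) * (INR n + a2) * (INR n + a3)) <=
                             (INR n + 1) * (INR n + b1) * (INR n + b2).
Hypothesis HR : radical_certificate Rl A B C = true.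
Hypothesis HABC : IZR A = 14 * al /\ IZR B = 14 * be /\ IZR C = - 14 * INR m.
Hypothesis Hsys : forall k, system_certificate Rl b E M k = true.
Hypothesis HE : forall k, IZR (E k) = 14112 * frob_exp (1 - b1) (1 - b2) k.
Hypothesis HM : forall k, IZR (M k) = 1008 * frob_mu a1 a2 a3 (1 - b1) (1 - b2) k.
Hypothesis HMsmall : (Z.abs (M 0%nat) + Z.abs (M 1%nat) + Z.abs (M 2%nat) <= 4032)%Z.
Hypothesis Hinit : forall k, zeval (b k) 0 = - 49 * frob (1 - b1) (1 - b2) k 1 0 0.
Hypothesis Hrec : recombination_certificate b L D = true.
Hypothesis HL : IZR D <> 0 /\ forall k, frob_weight (1 - b1) (1 - b2) k * IZR D = 49 * IZR (L k).

Let H k := candidate (b k) (radical al be m).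

Lemma candidate_at0 k : H k 0 = frob (1 - b1) (1 - b2) k 1 0 0.
Proof.
  unfold H, candidate, radical. rewrite Hinit.
  replace (zeval Np 0) with (-1) by (vm_compute; ring).
  replace (F1 0) with 1 by (unfold F1; ring).
  replace (G0 0) with 1 by (unfold G0; ring).
  replace (G1 0) with 1 by (unfold G1; ring).
  rewrite Rminus_0_r.
  rewrite !Rpower_1_base, pow1. field.
Qed.

Lemma radical_recombine x : zeval Np x <> 0 ->
  radical al be m x = sum3 (fun k => frob_weight (1 - b1) (1 - b2) k * H k x).
Proof.
  intros HN. destruct HL as [HD HLk].
  pose proof (zeqb_zeval _ _ x Hrec) as Hcomb.
  rewrite zeval_zlincomb3, zeval_scale, zeval_pow in Hcomb. unfold sum3 in Hcomb.
  assert (Hw : forall k, frob_weight (1 - b1) (1 - b2) k = 49 * IZR (L k) / IZR D)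
    by (intros k; rewrite <- HLk; field; exact HD).
  assert (HN3 : zeval Np x ^ 3 <> 0) by now apply pow_nonzero.
  unfold sum3, H, candidate. rewrite !Hw.
  apply Rminus_diag_uniq.
  transitivity (radical al be m x * (IZR D * zeval Np x ^ 3 -
    (IZR (L 0%nat) * zeval (b 0%nat) x + IZR (L 1%nat) * zeval (b 1%nat) x
     + IZR (L 2%nat) * zeval (b 2%nat) x)) / (IZR D * zeval Np x ^ 3)).
  - field. split; assumption.
  - rewrite Hcomb. unfold Rdiv. ring.
Qed.

Lemma frob_mu_eq j : frob_mu a1 a2 a3 (1 - b1) (1 - b2) j = IZR (M j) / 1008.
Proof. rewrite HM; field. Qed.

Lemma frob_mu_abs_sum_le : sum3 (fun k => Rabs (frob_mu a1 a2 a3 (1 - b1) (1 - b2) k)) <= 4.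
Proof.
  assert (Habs : forall j, Rabs (frob_mu a1 a2 a3 (1 - b1) (1 - b2) j) = IZR (Z.abs (M j)) / 1008).
  { intros j. rewrite frob_mu_eq, <- Rabs_Zabs. unfold Rdiv.
    rewrite Rabs_mult, (Rabs_pos_eq (/ 1008)) by lra. reflexivity. }
  pose proof (IZR_le _ _ HMsmall) as Hsum. rewrite !plus_IZR in Hsum.
  unfold sum3; rewrite !Habs. lra.
Qed.

Lemma candidates_system x k :
  x <> 0 -> x < 1 -> 0 < F1 x -> 0 < G0 x -> 0 < G1 x -> zeval Np x < 0 ->
  Phi3 x * dcandidate (b k) (radical al be m) (logderiv_radical Rl) x =
  dPhi3 x * (frob_exp (1 - b1) (1 - b2) k * H k x +
             Phi3 x / (1 - Phi3 x) * sum3 (fun j => frob_mu a1 a2 a3 (1 - b1) (1 - b2) j * H j x)).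
Proof.
  intros Hx0 Hx1 HF HG0 HG1 HN.
  replace (frob_exp (1 - b1) (1 - b2) k) with (IZR (E k) / 14112) by (rewrite HE; field).
  replace (sum3 (fun j => frob_mu a1 a2 a3 (1 - b1) (1 - b2) j * H j x))
    with (sum3 (fun j => IZR (M j) / 1008 * H j x)) by (unfold sum3; rewrite !frob_mu_eq; reflexivity).
  apply candidate_system; [apply Hsys | exact Hx0 | lra ..].
Qed.

Lemma hyp32_sum_Phi3_radical :
  near0 (fun x => hyp32_sum a1 a2 a3 b1 b2 (Phi3 x) (radical al be m x)).
Proof.
  destruct Phi3_near0 as [d [Hd Hnear]].
  destruct Hb as [Hb1 Hb2]. destruct He as [He1 [He2 [He12 [Le1 Le2]]]].
  destruct HABC as [HA [HB HC]].
  apply (hyp32_sum_of_pullback_system a1 a2 a3 b1 b2 Phi3 dPhi3 (radical al be m) H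
           (fun k => dcandidate (b k) (radical al be m) (logderiv_radical Rl)) 1 d);
    try assumption; [lra | unfold Phi3, Rdiv; ring | apply candidate_at0 | |].
  - intros x Hx. destruct (Hnear x Hx) as [G0x [G1x [F1x [Hx1 [HNx [Hsmall _]]]]]].
    split; [apply is_derive_Phi3; lra|].
    split; [lra|].
    split; [|apply radical_recombine; lra].
    intros k; apply is_derive_candidate; [apply (is_derive_radical _ A B C) | lra]; assumption.
  - intros x Hx. destruct (Hnear x (proj2 Hx)) as [G0x [G1x [F1x [Hx1 [HNx [Hsmall [Hlow Hkap]]]]]]].
    assert (Hx0 : x <> 0) by (intros ->; rewrite Rabs_R0 in Hx; lra).
    split; [intros H0; rewrite H0, Rabs_R0 in Hlow; pose proof (Rabs_pos_lt x Hx0); lra|].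
    split; [apply Hkap, Hx0|].
    split.
    { apply Rle_trans with (1/999 * (3 * 4)); [|lra].
      apply Rmult_le_compat; [apply Rabs_pos | | now apply Rabs_div_one_minus_le |].
      - apply Rmult_le_pos; [lra | apply sum3_nonneg; intros; apply Rabs_pos].
      - pose proof frob_mu_abs_sum_le; lra. }
    split; [rewrite Rmult_1_l; exact Hlow|].
    intros k; apply candidates_system; assumption.
Qed.

End Certificate.

(** * The three identities *)

Ltac certificate :=
  match goal with
  | |- _ /\ _ => split; certificate
  | |- forall n : nat, Rabs _ <= _ =>
      intros n; pose proof (pos_INR n); apply Rabs_le; split; nra
  | |- forall k : nat, _ => intros [|[|k]]; certificate
  | |- _ = true => vm_compute; reflexivity
  | |- (_ <= _)%Z => vm_compute; discriminate
  | |- zeval ?p 0 = _ =>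
      let p' := eval hnf in p in change p with p'; rewrite zeval_cons0;
      cbv beta iota delta [frob pick3]; lra
  | |- _ => cbv beta iota delta [frob_exp frob_mu frob_weight pick3]; simpl INR;
            first [lra | field]
  end.

Definition bA0 : zpoly :=
  [-3; -4941; -1545912; -179205696; 26217144582; -1003477698366; 18939161885880; -205837489837080;
  1471427514326646; -7511778002524062; 28813741516397268; -85759767813341652; 202340981840281446;
  -384456066985284774; 596643145013439228; -768649116495718404; 839968929893648577;
  -800770815580671681; 685968773270827608; -538018975365078096; 385266798204051390;
  -246367767450326862; 136529231842413036; -63661991778439476; 24333449028526212;
  -7468592907100980; 1814010168509856; -332754629249568; 30668154641376; 7281894993048;
  -3268970872428; 306085250052; 26211404019; 1112798661; -3619932; -18972]%Z.
Definition bA1 : zpoly :=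
  [0; -702; 308178; 7089084; 487192698; -403388688; -33747890724; 87118599954; 382172122470;
  -3223291836108; 15587804803974; -32805064334394; -153726701297322; 1390397327788920;
  -4947338000390574; 10176869534223876; -11512985400481956; 562808843533758; 24689033547695022;
  -53141863940148894; 67587322637200104; -60265487344306008; 39093109820262906;
  -18205516238272092; 5642322144845772; -830471177389284; -163457846697444; 131388129737934;
  -38708397116154; 7185739114344; -971054822922; 100103891994; -7063617138; 255421434; -1826112;
  -15900; -6]%Z.
Definition bA2 : zpoly :=
  [0; -468; 544932; 59133384; -3419405228; 95517132820; -1082137542628; 5051726771470;
  2947687450570; -186671804460128; 1318418063931182; -5609267186454598; 16952894151812074;
  -38685540158581796; 69100328154266950; -99866974155642892; 121941995626475592;
  -133369223914314504; 137800336181266180; -135146502672452342; 119468780604163666;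
  -88905568224382884; 52542466138739966; -23327302997301004; 7095219370141736; -1037494459764116;
  -251281379924720; 223099340247258; -80041502613194; 17186491849384; -1911096047590; 44675395710;
  722172342; 598854776; -1440818; -21080]%Z.
Definition RA : zpoly :=
  [-234; 1926; 7272; -58462; 152966; -217490; 169428; -53142; -11630; 10454; -1084; -6]%Z.

Lemma hyp32_sum_Phi3_A :
  near0 (fun x => hyp32_sum (-1/42) (13/42) (9/14) (4/7) (6/7) (Phi3 x) (radical (1/7) (-1/14) 0 x)).
Proof.
  apply (hyp32_sum_Phi3_radical _ _ _ _ _ _ _ _ RA 2 (-1) 0 (pick3 bA0 bA1 bA2)
           (pick3 0 6048 2016) (pick3 (-78) 2635 (-1045)) (pick3 2 1 (-3)) 6)%Z; certificate.
Qed.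

Definition bB0 : zpoly :=
  [2; 6822; -771010; -71131388; 3208079598; -77620636056; 766302177710; -3028730160132;
  -6554129772728; 143139078822414; -881637642941340; 3450591540682208; -9827845493318842;
  21374648041264278; -36304492739293402; 49023625259931552; -54205469814909780; 52154658759670402;
  -48126717973842836; 45642875329227228; -42682192030070682; 35543838775223014;
  -24389876287152234; 13217933092830640; -5527450537982446; 1755368854554852; -411209133621250;
  61338718716992; -130152216768; -2613426356042; 530620163464; -20554960884; -1165359764;
  -77382612; 528552; 468]%Z.
Definition bB1 : zpoly :=
  [0; 5016; -994422; 11983686; -936850590; 1968354852; 78095632950; -422770351944; -1173401272728;
  15513773577690; -43951642597224; -36979554875880; 728258186598366; -3161114512525566;
  8868443476909458; -18358708035358608; 28864473229597674; -34128965265722196; 28792060442753952;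
  -14185384895266050; -1565575105851426; 10416849659728770; -10760966175455886; 6715340068521888;
  -2826634165504782; 789750310981308; -124728960193914; -740534261184; 6026740375812;
  -1678280156922; 248136851724; -20737194432; 889425738; -17149446; 283608; 702]%Z.
Definition bB2 : zpoly :=
  [0; 3135; -2868525; -377050155; 36870393465; -1264370223450; 21655899704550; -217703230758534;
  1457952575189298; -7026430210307148; 25543427679789084; -72167892477365700; 161728879928637228;
  -292090028765358420; 431628022934448684; -531045428587565496; 555559002416530704;
  -505139104515066345; 405026678590634619; -286313147885000163; 176616788124225633;
  -95034825452935404; 46057756201434132; -21304565796639000; 9633922321515216; -4089408679807824;
  1554754094713296; -509331229545408; 128167611490032; -17985972679458; -215992393170;
  268660258374; 19403584422; 234728019; -1720737; 5049; -3]%Z.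
Definition RB : zpoly :=
  [1254; -29678; 156602; -399486; 536162; -382942; 162162; -86950; 62238; -18558; -810; 2]%Z.

Lemma hyp32_sum_Phi3_B :
  near0 (fun x => hyp32_sum (5/42) (19/42) (11/14) (5/7) (8/7) (Phi3 x) (radical (2/7) (5/14) 1 x)).
Proof.
  apply (hyp32_sum_Phi3_radical _ _ _ _ _ _ _ _ RB 4 5 (-14) (pick3 bB0 bB1 bB2)
           (pick3 0 4032 (-2016)) (pick3 (-1045) 2635 (-78)) (pick3 (-3) 1 2) 6)%Z; certificate.
Qed.

Definition bC0 : zpoly :=
  [-6; 16116; -2386392; -183830286; 236422422; 2831579430; -67670033316; 515276672058;
  1286166155838; -22504547737128; 61833079573014; 107417270797644; -1194822330089988;
  4152309117609414; -9501557737336578; 17412012312281814; -28353213153446928; 41876983507773126;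
  -53876687394369360; 57457920267681372; -49019692865404596; 32573428513417686;
  -16346601229060794; 5864307622009182; -1307243300621634; 79469049374994; 45755269439688;
  -9398300142198; -2763045135186; 1589584970016; -304669229022; 27371461308; -1066429974;
  18842142; -818862; -5016]%Z.
Definition bC1 : zpoly :=
  [0; 21080; -2178618; -537324364; 19538112452; -374254628670; 3025727740780; -8279649210866;
  -46124516204274; 593232287836648; -3281477030857850; 12065666211980748; -32600308321507064;
  67700600284194170; -111466412816714910; 150050340617499030; -171278842325946290;
  172499938644206718; -157621977794938198; 130442361403684006; -94831017880664694;
  58152358455748826; -29009151725022150; 11436472630024830; -3482391134188202; 813663263804950;
  -159669345870156; 37927071926098; -12461112179634; 3335330451432; -470360737018; 16775231720;
  472974984; 93272358; -530980; -6894; 2]%Z.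
Definition bC2 : zpoly :=
  [0; 18972; -4283952; -978432633; 60778806240; -1709752824660; 25117920882288; -226048632846636;
  1397367211827696; -6332281236128388; 21890776236829200; -59317478883254652; 128531725944699072;
  -226257812216031072; 328070143425439440; -397390715725034490; 408557786841498240;
  -362624159075009532; 282118162777553232; -194935571354788707; 122120608228111200;
  -72200335358991144; 41921660571431712; -23551240267591362; 11941815994765008; -5146826435129520;
  1846821661523136; -540119816791242; 114066064301232; -10696770031716; -1441060703520;
  300601219410; 22839014400; 472714680; -2758800; -3135]%Z.
Definition RC : zpoly :=
  [4216; -89652; 448570; -1177560; 1680120; -1326836; 695842; -402660; 223008; -51704; -3342;
  4]%Z.

Lemma hyp32_sum_Phi3_C :
  near0 (fun x => hyp32_sum (17/42) (31/42) (15/14) (9/7) (10/7) (Phi3 x) (radical (-3/7) (17/14) 3 x)).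
Proof.
  apply (hyp32_sum_Phi3_radical _ _ _ _ _ _ _ _ RC (-6) 17 (-42) (pick3 bC0 bC1 bC2)
           (pick3 0 (-4032) (-6048)) (pick3 2635 (-1045) (-78)) (pick3 1 (-3) 2) 6)%Z; certificate.
Qed.

Theorem mainTheorem6 :
  exists delta : R, 0 < delta /\
  forall x : R, Rabs x < delta ->
    hyp32_sum (-1/42) (13/42) (9/14) (4/7) (6/7) (Phi3 x)
      (Rpower (1 - x) (1/7) * Rpower (G0 x) (-1/14) * Rpower (G1 x) (-1/14)) /\
    hyp32_sum (5/42) (19/42) (11/14) (5/7) (8/7) (Phi3 x)
      (Rpower (1 - x) (2/7) * / F1 x * Rpower (G0 x) (5/14) * Rpower (G1 x) (5/14)) /\
    hyp32_sum (17/42) (31/42) (15/14) (9/7) (10/7) (Phi3 x)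
      (Rpower (1 - x) (-3/7) * / (F1 x ^ 3) * Rpower (G0 x) (17/14) * Rpower (G1 x) (17/14)).
Proof.
  apply (near0_impl _ _ (near0_and _ _ hyp32_sum_Phi3_A (near0_and _ _ hyp32_sum_Phi3_B hyp32_sum_Phi3_C))).
  intros x [HA [HB HC]]. unfold radical in HA, HB, HC.
  rewrite pow_O, Rinv_1, Rmult_1_r in HA. rewrite pow_1 in HB.
  split; [exact HA | split; [exact HB | exact HC]].
Qed.
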